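(* For any graph $G$, $|\mathcal{O}(G)|\le \Phi(G)$, where $\mathcal{O}(G)$ is the LC orbit of $G$ and $\Phi(G)$ is the number of graphs QASST equivalent to $G$.
   Context: Graphs are finite, simple, connected, with a fixed labelled vertex set. The local complement $c_v(G)$ replaces the induced subgraph on the neighbourhood of $v$ by its complement. $\mathcal{O}(G)$ is the set of all graphs on $V(G)$ obtainable from $G$ by finite sequences of local complements (distinct edge sets are counted as distinct graphs). Splits, strong splits and the split decomposition: a split is a bipartition $V=A\sqcup B$ with the $A$–$B$ edges forming a complete bipartite graph between the vertices having neighbours across; it is strong if no other split crosses it (each side of one meeting each side of the other). Cutting along all nontrivial strong splits (replacing each side by itself plus a new paired marker vertex, a split-node, adjacent to the vertices having neighbours across) yields a tree (the strong split tree) whose nodes are labelled by quotient graphs. Two graphs on the same vertex set are QASST equivalent if they have the same strong splits (hence the same strong split tree and corresponding quotient graphs on the same vertex sets) and each quotient graph of one is locally equivalent to the corresponding quotient graph of the other. *)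

From mathcomp Require Import all_boot.
Set Implicit Arguments. Unset Strict Implicit. Unset Printing Implicit Defensive.

Section Graphs.
Variable T : finType.

Definition graph := {ffun T -> {set T}}.

Definition adj (G : graph) (x y : T) : bool := y \in G x.

Definition simple_graph (G : graph) : bool :=
  [forall x, x \notin G x] && [forall x, forall y, (y \in G x) == (x \in G y)].

Definition connected_graph (G : graph) : bool :=
  [forall x, forall y, connect (adj G) x y].

Definition local_complement (v : T) (G : graph) : graph :=
  [ffun x => [set y | if [&& x \in G v, y \in G v & x != y]
                      then y \notin G x else y \in G x]].

Definition lc_step : rel graph := fun G H => [exists v, H == local_complement v G].

Definition LC_orbit (G : graph) : {set graph} := [set H | connect lc_step G H].

Definition locally_equivalent (G H : graph) : bool := connect lc_step G H.

Definition frontier (G : graph) (A : {set T}) : {set T} :=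
  [set x in A | [exists y in ~: A, adj G x y]].

Definition is_split (G : graph) (A : {set T}) : bool :=
  [&& A != set0, ~: A != set0 &
      [forall x in frontier G A, forall y in frontier G (~: A), adj G x y]].

Definition crossing (A B : {set T}) : bool :=
  [&& A :&: B != set0, A :&: ~: B != set0, ~: A :&: B != set0 & ~: A :&: ~: B != set0].

Definition strong_split (G : graph) (A : {set T}) : bool :=
  is_split G A && [forall B, is_split G B ==> ~~ crossing A B].

(* Partitions of V arising at the nodes of the strong split tree: every part
   (the leaf set behind a marker vertex, or a single original vertex) is a side
   of a (possibly trivial) strong split, and every strong split has a side
   inside one part.  (This also admits the 2-part partitions {A, V\A} for
   strong splits A, whose quotient is K2 for both graphs, hence harmless.) *)
Definition node_partition (G : graph) (P : {set {set T}}) : bool :=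
  [&& partition P [set: T],
      [forall X in P, strong_split G X] &
      [forall A, strong_split G A ==>
         [exists X in P, (A \subset X) || (~: A \subset X)]]].

(* quotient graph at a node: vertices are the parts (marker vertices are
   identified with the leaf set behind them), two parts adjacent iff G has an
   edge between them. Parts outside P are isolated dummy vertices. *)
Definition quotient_graph (G : graph) (P : {set {set T}}) : {ffun {set T} -> {set {set T}}} :=
  [ffun X => [set Y | [&& X \in P, Y \in P, X != Y &
                         [exists x in X, exists y in Y, adj G x y]]]].

End Graphs.

Definition QASST (T : finType) (G H : graph T) : bool :=
  [forall A : {set T}, strong_split G A == strong_split H A] &&
  [forall P : {set {set T}}, node_partition G P ==>
       locally_equivalent (quotient_graph G P) (quotient_graph H P)].

Definition Phi (T : finType) (G : graph T) : nat :=
  #|[set H : graph T | [&& simple_graph H, connected_graph H & QASST G H]]|.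

From mathcomp Require Import all_boot.
Set Implicit Arguments. Unset Strict Implicit. Unset Printing Implicit Defensive.

(* Local complementation at v toggles the edges across a bipartition (A, V\A)
   exactly on (N(v) ∩ A) × (N(v) \ A).  If the cross edges of a split form a
   complete bipartite graph S × U and v ∈ A, then N(v) \ A is U or empty, so
   the new cross edges form (S Δ N(v)) × U or are unchanged: splits, hence
   strong splits and the strong split tree, are LC invariants.  At a node with
   partition P, let X be the part containing v.  If N(v) ⊆ X, no edge between
   parts changes.  Otherwise, inside every other part linked to X the
   neighbours of v are exactly the vertices with a neighbour outside that
   part, and the quotient undergoes local complementation at X.  So each LC
   step keeps every quotient in its LC class. *)

Lemma connect_invariant (T : finType) (e : rel T) (a : pred T) x y :
  (forall u w, a u -> e u w -> a w) -> a x -> connect e x y -> a y.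
Proof.
move=> stable_a ax /connectP[p + ->].
by elim: p x ax => //= w p IHp x ax /andP[/(stable_a x w ax)/IHp].
Qed.

Section Rectangles.
Variable T : finType.
Implicit Types (A B : {set T}) (R : rel T).

(* The pairs of R in A × B form a product S × U. *)
Definition rectangular A B R := forall a1 a2 b1 b2,
  a1 \in A -> a2 \in A -> b1 \in B -> b2 \in B -> R a1 b2 -> R a2 b1 -> R a1 b1.

Lemma rectangular_flip A B R :
  rectangular A B R -> rectangular B A (fun b a => R a b).
Proof. by move=> rR b1 b2 a1 a2 *; apply: (rR a1 a2 b1 b2). Qed.

Lemma eq_rectangular A B R1 R2 : rectangular A B R1 ->
  {in A & B, forall a b, R1 a b = R2 a b} -> rectangular A B R2.
Proof.
move=> rR eqR a1 a2 b1 b2 a1A a2A b1B b2B; rewrite -!eqR //.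
exact: rR.
Qed.

(* R v is either the column set of the rectangle R or empty. *)
Lemma rectangular_addb A B R (p : pred T) v : v \in A ->
  rectangular A B R -> rectangular A B (fun a b => R a b (+) (p a && R v b)).
Proof.
move=> vA rR a1 a2 b1 b2 a1A a2A b1B b2B.
have := rR v a2 b1 b2 vA a2A b1B b2B; have := rR a1 a2 b1 b2 a1A a2A b1B b2B.
have := rR v a1 b2 b1 vA a1A b2B b1B; have := rR a1 v b1 b2 a1A vA b1B b2B.
have := rR a1 v b2 b1 a1A vA b2B b1B.
by case: (R v b1); case: (R v b2); case: (R a1 b1); case: (R a1 b2);
   case: (R a2 b1); case: (p a1); case: (p a2).
Qed.

End Rectangles.

Section LocalComplement.
Variable T : finType.
Implicit Types (K : graph T) (A : {set T}) (v x y : T).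

Lemma simple_graphP K :
  reflect ((forall x, ~~ adj K x x) /\ symmetric (adj K)) (simple_graph K).
Proof.
apply: (iffP andP) => [[/forallP irrK /forallP symK]|[irrK symK]].
  by split=> // x y; apply/eqP/(forallP (symK x)).
by split; apply/forallP => x; [exact: irrK | apply/forallP => y; apply/eqP/symK].
Qed.

Lemma lcE K v x y : (y \in local_complement v K x) =
  if [&& x \in K v, y \in K v & x != y] then y \notin K x else y \in K x.
Proof. by rewrite ffunE inE. Qed.

Lemma adj_lc K v x y : x != y ->
  adj (local_complement v K) x y = adj K x y (+) (adj K v x && adj K v y).
Proof.
by move=> xy; rewrite /adj lcE xy andbT; case: ifP => _; rewrite ?addbT ?addbF.
Qed.

Lemma adj_lc_pivot K v x : simple_graph K ->
  adj (local_complement v K) v x = adj K v x.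
Proof.
case/simple_graphP => irrK _.
by rewrite /adj lcE -/(adj K v v) (negbTE (irrK v)).
Qed.

Lemma lc_simple K v : simple_graph K -> simple_graph (local_complement v K).
Proof.
case/simple_graphP => irrK symK; apply/simple_graphP; split=> [x|x y].
  by rewrite /adj lcE eqxx !andbF; apply: irrK.
rewrite /adj !lcE [y == x]eq_sym -/(adj K x y) -/(adj K y x) symK.
by case: (x \in K v); case: (y \in K v).
Qed.

Lemma lc_involutive K v :
  simple_graph K -> local_complement v (local_complement v K) = K.
Proof.
move=> sK; apply/ffunP => x; apply/setP => y.
rewrite lcE -!/(adj _ v _) !adj_lc_pivot // lcE /adj.
by case: ifP => ->; rewrite ?negbK.
Qed.

Lemma lc_connected K v :
  simple_graph K -> connected_graph K -> connected_graph (local_complement v K).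
Proof.
move=> sK /forallP connK; have /simple_graphP[_ symL] := lc_simple v sK.
apply/forallP => x; apply/forallP => y.
apply: connect_sub (forallP (connK x) y) => a b ab.
have [/andP[va vb]|/negbTE nab] := boolP (adj K v a && adj K v b).
  (* an edge removed inside N(v) is bypassed through v *)
  by apply: (connect_trans (y := v)); apply: connect1;
     [rewrite symL|]; rewrite adj_lc_pivot.
apply: connect1; rewrite adj_lc ?nab ?addbF //.
by apply: contraTneq ab => ->; have /simple_graphP[->] := sK.
Qed.

Lemma is_splitP K A : simple_graph K ->
  reflect [/\ A != set0, ~: A != set0 & rectangular A (~: A) (adj K)]
          (is_split K A).
Proof.
case/simple_graphP => _ symK; apply: (iffP and3P) => -[A0 CA0 rectK]; split=> //.
  move=> a1 a2 b1 b2 a1A a2A b1A b2A a1b2 a2b1.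
  apply: (forall_inP (forall_inP rectK a1 _)).
    by rewrite inE a1A; apply/exists_inP; exists b2.
  by rewrite inE b1A; apply/exists_inP; exists a2; rewrite ?setCK // symK.
apply/forall_inP => x /setIdP[xA /exists_inP[b xb bA]].
apply/forall_inP => y /setIdP[yA /exists_inP[a]]; rewrite setCK => aA ya.
by apply: (rectK x a y b) => //; rewrite symK.
Qed.

Lemma split_adj K A a1 a2 b1 b2 : simple_graph K -> is_split K A ->
  a1 \in A -> a2 \in A -> b1 \notin A -> b2 \notin A ->
  adj K a1 b2 -> adj K a2 b1 -> adj K a1 b1.
Proof.
move=> sK /(is_splitP _ sK)[_ _ rectK] a1A a2A b1A b2A.
by apply: rectK; rewrite ?inE.
Qed.

Lemma is_splitC K A : simple_graph K -> is_split K (~: A) = is_split K A.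
Proof.
move=> sK; have /simple_graphP[_ symK] := sK.
suff splitC B : is_split K B -> is_split K (~: B).
  by apply/idP/idP => /splitC; rewrite ?setCK.
case/(is_splitP _ sK) => B0 CB0 rectK; apply/(is_splitP _ sK).
rewrite setCK; split=> //.
exact: eq_rectangular (rectangular_flip rectK) (fun b a _ _ => symK a b).
Qed.

Lemma lc_preserves_split K v A :
  simple_graph K -> is_split K A -> is_split (local_complement v K) A.
Proof.
move=> sK; wlog vA : A / v \in A => [wlog_vA|].
  have [/wlog_vA//|vA] := boolP (v \in A).
  rewrite -(is_splitC A sK) -(is_splitC A (lc_simple v sK)).
  by apply: wlog_vA; rewrite inE.
case/(is_splitP _ sK) => A0 CA0 rectK.
apply/(is_splitP _ (lc_simple v sK)); split=> //.
apply: (eq_rectangular (rectangular_addb (p := adj K v) vA rectK)) => a b aA bA.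
by rewrite adj_lc //; apply: contraTneq bA => <-; rewrite inE negbK.
Qed.

Lemma is_split_lc K v A :
  simple_graph K -> is_split (local_complement v K) A = is_split K A.
Proof.
move=> sK; apply/idP/idP; last exact: lc_preserves_split.
by rewrite -{2}(lc_involutive v sK); apply: lc_preserves_split; apply: lc_simple.
Qed.

Lemma strong_split_lc K v A :
  simple_graph K -> strong_split (local_complement v K) A = strong_split K A.
Proof.
move=> sK; rewrite /strong_split is_split_lc //; congr (_ && _).
by apply: eq_forallb => B; rewrite is_split_lc.
Qed.

End LocalComplement.

Section Quotients.
Variable T : finType.
Implicit Types (K : graph T) (P : {set {set T}}) (Y Z : {set T}).

Definition edge_between K Y Z := [exists y in Y, exists z in Z, adj K y z].

Lemma quotient_graphE K P Y Z : (Z \in quotient_graph K P Y) =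
  [&& Y \in P, Z \in P, Y != Z & edge_between K Y Z].
Proof. by rewrite ffunE inE. Qed.

Lemma edge_betweenC K Y Z :
  simple_graph K -> edge_between K Y Z = edge_between K Z Y.
Proof.
case/simple_graphP => _ symK.
by apply/exists_inP/exists_inP => -[y yY /exists_inP[z zZ yz]];
   exists z => //; apply/exists_inP; exists y; rewrite // symK.
Qed.

Lemma eq_edge_between K1 K2 Y Z :
  {in Y & Z, forall y z, adj K1 y z = adj K2 y z} ->
  edge_between K1 Y Z = edge_between K2 Y Z.
Proof.
move=> eqK; apply/exists_inP/exists_inP => -[y yY /exists_inP[z zZ yz]];
  exists y => //; apply/exists_inP; exists z; rewrite // ?eqK //.
by rewrite -eqK.
Qed.

End Quotients.

Section QuotientLocalComplement.
Variables (T : finType) (K : graph T) (P : {set {set T}}) (v : T).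
Hypotheses (sK : simple_graph K) (partP : partition P [set: T])
           (splitP : {in P, forall Y, is_split K Y}).

Local Notation X := (pblock P v).
Local Notation K' := (local_complement v K).

Let vX : v \in X.
Proof. by rewrite mem_pblock (cover_partition partP) inE. Qed.

Let XP : X \in P.
Proof. by rewrite pblock_mem // (cover_partition partP) inE. Qed.

Let part_eq Y Z y : Y \in P -> Z \in P -> y \in Y -> y \in Z -> Y = Z.
Proof.
case/and3P: partP => _ trivP _ YP ZP yY yZ.
by rewrite -(def_pblock trivP YP yY) -(def_pblock trivP ZP yZ).
Qed.

Let part_notin Y Z y : Y \in P -> Z \in P -> Y != Z -> y \in Y -> y \notin Z.
Proof.
by move=> YP ZP YZ yY; apply: contra YZ => yZ; rewrite (part_eq YP ZP yY yZ).
Qed.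

Let part_neq Y Z y z :
  Y \in P -> Z \in P -> Y != Z -> y \in Y -> z \in Z -> y != z.
Proof.
by move=> YP ZP YZ yY; apply: contraTneq => <-; apply: part_notin YP ZP YZ yY.
Qed.

Lemma quotient_lc_inside : (forall w, adj K v w -> w \in X) ->
  quotient_graph K' P = quotient_graph K P.
Proof.
move=> NvX; apply/ffunP => Y; apply/setP => Z; rewrite !quotient_graphE.
have [YP|] //= := boolP (Y \in P); have [ZP|] //= := boolP (Z \in P).
have [|YZ] //= := eqVneq Y Z.
apply: eq_edge_between => y z yY zZ; rewrite adj_lc ?(part_neq YP ZP YZ) //.
have [/andP[/NvX yX /NvX zX]|_] := boolP (adj K v y && adj K v z).
  by rewrite (part_eq YP XP yY yX) (part_eq ZP XP zZ zX) eqxx in YZ.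
by rewrite addbF.
Qed.

Section PivotWithOutsideNeighbour.
Variable b0 : T.
Hypotheses (b0X : b0 \notin X) (vb0 : adj K v b0).

Lemma pivot_adj_outside x w : x \in X -> w \notin X -> adj K x w -> adj K v w.
Proof. by move=> xX wX; apply: (split_adj sK (splitP XP) vX xX wX b0X vb0). Qed.

Lemma pivot_neighbour_in Z : Z \in P -> X != Z -> edge_between K X Z ->
  exists2 z, z \in Z & adj K v z.
Proof.
move=> ZP XZ /exists_inP[x xX /exists_inP[z zZ xz]]; exists z => //.
apply: (pivot_adj_outside xX _ xz).
by apply: part_notin ZP XP _ zZ; rewrite eq_sym.
Qed.

Lemma pivot_adj_frontier Y y w : Y \in P -> X != Y -> edge_between K X Y ->
  y \in Y -> w \notin Y -> adj K y w -> adj K v y.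
Proof.
have /simple_graphP[_ symK] := sK.
move=> YP XY XYlinked yY wY yw.
have [y1 y1Y vy1] := pivot_neighbour_in YP XY XYlinked.
rewrite symK; apply: (split_adj sK (splitP YP) yY y1Y _ wY yw) => //.
  exact: part_notin XP YP XY vX.
by rewrite symK.
Qed.

Lemma edge_between_lc_pivot_part Z : Z \in P -> X != Z ->
  edge_between K' X Z = edge_between K X Z.
Proof.
move=> ZP XZ; apply/idP/idP.
  case/exists_inP => x xX /exists_inP[z zZ].
  rewrite adj_lc ?(part_neq XP ZP XZ) //.
  have [vz _|_] := boolP (adj K v z).
    by apply/exists_inP; exists v => //; apply/exists_inP; exists z.
  rewrite andbF addbF => xz.
  by apply/exists_inP; exists x => //; apply/exists_inP; exists z.
case/exists_inP => x xX /exists_inP[z zZ xz].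
apply/exists_inP; exists v => //; apply/exists_inP; exists z => //.
rewrite adj_lc_pivot //; apply: (pivot_adj_outside xX _ xz).
by apply: part_notin ZP XP _ zZ; rewrite eq_sym.
Qed.

Lemma edge_between_lc_unlinked Y Z : Y \in P -> Z \in P -> Y != Z -> X != Y ->
  ~~ edge_between K X Y -> edge_between K' Y Z = edge_between K Y Z.
Proof.
move=> YP ZP YZ XY XYunlinked; apply: eq_edge_between => y z yY zZ.
rewrite adj_lc ?(part_neq YP ZP YZ) //.
suff -> : adj K v y = false by rewrite addbF.
apply: contraNF XYunlinked => vy.
by apply/exists_inP; exists v => //; apply/exists_inP; exists y.
Qed.

Lemma edge_between_lc_linked Y Z : Y \in P -> Z \in P -> Y != Z ->
  X != Y -> X != Z -> edge_between K X Y -> edge_between K X Z ->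
  edge_between K' Y Z = ~~ edge_between K Y Z.
Proof.
have /simple_graphP[_ symK] := sK.
move=> YP ZP YZ XY XZ XYlinked XZlinked.
have zY z : z \in Z -> z \notin Y by apply: part_notin ZP YP _; rewrite eq_sym.
have yZ y : y \in Y -> y \notin Z by apply: part_notin YP ZP YZ.
have vY : v \notin Y by apply: part_notin XP YP XY vX.
have vZ : v \notin Z by apply: part_notin XP ZP XZ vX.
have [YZlinked|YZunlinked] := boolP (edge_between K Y Z); last first.
  have [y yY vy] := pivot_neighbour_in YP XY XYlinked.
  have [z zZ vz] := pivot_neighbour_in ZP XZ XZlinked.
  apply/exists_inP; exists y => //; apply/exists_inP; exists z => //.
  rewrite adj_lc ?(part_neq YP ZP YZ) // vy vz addbT.
  apply: contra YZunlinked => yz.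
  by apply/exists_inP; exists y => //; apply/exists_inP; exists z.
have toggled y z : y \in Y -> z \in Z -> adj K v y && adj K v z = adj K y z.
  move=> yY zZ; case/exists_inP: YZlinked => y1 y1Y /exists_inP[z1 z1Z y1z1].
  apply/andP/idP => [[vy vz]|yz].
    have yz1 : adj K y z1.
      by apply: (split_adj sK (splitP YP) yY y1Y (zY _ z1Z) vY); rewrite // symK.
    rewrite symK.
    by apply: (split_adj sK (splitP ZP) zZ z1Z (yZ _ yY) vZ); rewrite // symK.
  split; first exact: (pivot_adj_frontier YP XY XYlinked yY (zY _ zZ) yz).
  by apply: (pivot_adj_frontier ZP XZ XZlinked zZ (yZ _ yY)); rewrite symK.
apply/exists_inP => -[y yY /exists_inP[z zZ]].
by rewrite adj_lc ?(part_neq YP ZP YZ) // toggled // addbb.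
Qed.

Lemma quotient_lc_outside :
  quotient_graph K' P = local_complement X (quotient_graph K P).
Proof.
have sK' := lc_simple v sK.
apply/ffunP => Y; apply/setP => Z; rewrite lcE !quotient_graphE XP /=.
have [YP|] //= := boolP (Y \in P); have [ZP|] /= := boolP (Z \in P); last first.
  by rewrite andbF.
have [|YZ] /= := eqVneq Y Z; first by rewrite !andbF.
have [XY|XY] /= := eqVneq X Y.
  by subst Y; apply: edge_between_lc_pivot_part ZP YZ.
have [XZ|XZ] /= := eqVneq X Z.
  subst Z; rewrite andbF edge_betweenC // edge_between_lc_pivot_part 1?eq_sym //.
  exact: edge_betweenC.
rewrite andbT.
have [XYlinked|XYunlinked] /= := boolP (edge_between K X Y); last first.
  exact: edge_between_lc_unlinked YP ZP YZ XY XYunlinked.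
have [XZlinked|XZunlinked] /= := boolP (edge_between K X Z).
  exact: edge_between_lc_linked YP ZP YZ XY XZ XYlinked XZlinked.
rewrite edge_betweenC // edge_between_lc_unlinked // 1?eq_sym //.
exact: edge_betweenC.
Qed.

End PivotWithOutsideNeighbour.

Lemma quotient_lc_connect :
  connect (@lc_step _) (quotient_graph K P) (quotient_graph K' P).
Proof.
have [/exists_inP[b0 b0X vb0]|noOut] := boolP [exists w in ~: X, adj K v w].
  rewrite inE in b0X; rewrite (quotient_lc_outside b0X vb0); apply: connect1.
  by apply/existsP; exists X.
rewrite quotient_lc_inside // => w vw; apply: contraR noOut => wX.
by apply/exists_inP; exists w; rewrite ?inE.
Qed.

End QuotientLocalComplement.

Lemma QASST_refl (T : finType) (G : graph T) : QASST G G.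
Proof.
apply/andP; split; first by apply/forallP.
by apply/forall_inP => P _; apply: connect0.
Qed.

Lemma QASST_lc (T : finType) (G H : graph T) v :
  simple_graph H -> QASST G H -> QASST G (local_complement v H).
Proof.
move=> sH /andP[/forallP eqStrong /forall_inP eqQuot]; apply/andP; split.
  by apply/forallP => A; rewrite strong_split_lc.
apply/forall_inP => P nodeP; apply: connect_trans (eqQuot P nodeP) _.
case/and3P: nodeP => partP /forall_inP strongP _.
apply: quotient_lc_connect => // X /strongP.
by rewrite (eqP (eqStrong X)) => /andP[].
Qed.

Lemma LC_orbit_sub_QASST (T : finType) (G : graph T) :
  simple_graph G -> connected_graph G ->
  LC_orbit G \subset [set H | [&& simple_graph H, connected_graph H & QASST G H]].
Proof.
move=> sG cG; apply/subsetP => H; rewrite !inE.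
apply: (connect_invariant (a := fun K =>
  [&& simple_graph K, connected_graph K & QASST G K])); last first.
  by rewrite /= sG cG QASST_refl.
move=> K _ /and3P[sK cK GK] /existsP[v /eqP->].
by rewrite /= lc_simple ?lc_connected ?QASST_lc.
Qed.

Theorem corollary2 (T : finType) (G : graph T) :
  simple_graph G -> connected_graph G -> #|LC_orbit G| <= Phi G.
Proof.
by move=> sG cG; apply/subset_leq_card/LC_orbit_sub_QASST.
Qed.
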